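(* Let $\tau > 0$ and $\lambda > 0$ be constants. Then the function $$c(x,y,d) \triangleq \log\left(1 + \left[\left(\frac{1}{1+x}\right)\left(\frac{1}{y}\right) + \tau\right]\frac{1}{d^{\lambda}}\right)$$ is convex on the set $\{(x,y,d) \in \mathbb{R}^3 : x > -1,\ y > 0,\ d > 0\}$.
   Context: $\log$ denotes the natural logarithm. *)

From Stdlib Require Import Reals.
Open Scope R_scope.

Definition pt3 : Type := (R * R * R)%type.

Definition dom3 (p : pt3) : Prop :=
  let '(x, y, d) := p in -1 < x /\ 0 < y /\ 0 < d.

Definition cfun (tau lambda : R) (p : pt3) : R :=
  let '(x, y, d) := p in
  ln (1 + ((1 / (1 + x)) * (1 / y) + tau) * (1 / Rpower d lambda)).

Definition comb3 (t : R) (p q : pt3) : pt3 :=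
  let '(x1, y1, d1) := p in
  let '(x2, y2, d2) := q in
  (t * x1 + (1 - t) * x2, t * y1 + (1 - t) * y2, t * d1 + (1 - t) * d2).

Definition convex_on3 (S : pt3 -> Prop) (f : pt3 -> R) : Prop :=
  forall p q t, S p -> S q -> 0 <= t <= 1 ->
    f (comb3 t p q) <= t * f p + (1 - t) * f q.

(* The map g := (1/(1+x) * 1/y + tau) * d^(-lambda) is log-convex on the
   domain: the coordinates 1+x, y, d are positive and affine, hence
   log-concave; reciprocals of log-concave functions and positive powers of
   log-concave functions are log-convex resp. log-concave; and log-convexity is
   preserved by products and, by Hoelder's inequality
   u1^t u2^(1-t) + v1^t v2^(1-t) <= (u1+v1)^t (u2+v2)^(1-t), by sums.  Hence
   1 + g is log-convex, i.e. c = ln (1 + g) is convex. *)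

From Stdlib Require Import Reals Lra.
Open Scope R_scope.

Definition geomean (t u v : R) : R := exp (t * ln u + (1 - t) * ln v).

Lemma geomean_pos t u v : 0 < geomean t u v.
Proof. apply exp_pos. Qed.

Lemma ln_geomean t u v : ln (geomean t u v) = t * ln u + (1 - t) * ln v.
Proof. apply ln_exp. Qed.

Lemma geomean_const t c : 0 < c -> geomean t c c = c.
Proof.
  intros hc. unfold geomean.
  replace (t * ln c + (1 - t) * ln c) with (ln c) by ring.
  now apply exp_ln.
Qed.

Lemma geomean_mult t u1 u2 v1 v2 : 0 < u1 -> 0 < u2 -> 0 < v1 -> 0 < v2 ->
  geomean t (u1 * v1) (u2 * v2) = geomean t u1 u2 * geomean t v1 v2.
Proof.
  intros. unfold geomean. rewrite <- exp_plus, !ln_mult by assumption.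
  f_equal; ring.
Qed.

Lemma geomean_inv t u v : 0 < u -> 0 < v -> geomean t (/ u) (/ v) = / geomean t u v.
Proof.
  intros. unfold geomean. rewrite <- exp_Ropp, !ln_Rinv by assumption.
  f_equal; ring.
Qed.

Lemma geomean_Rpower t u v l :
  geomean t (Rpower u l) (Rpower v l) = Rpower (geomean t u v) l.
Proof. unfold geomean, Rpower. rewrite !ln_exp. f_equal; ring. Qed.

(* Weighted AM-GM, from [1 + x <= exp x] at the two points [ln u - m] and
   [ln v - m], where [m] is the logarithm of the geometric mean. *)
Lemma geomean_le_arith t u v : 0 < u -> 0 < v -> 0 <= t <= 1 ->
  geomean t u v <= t * u + (1 - t) * v.
Proof.
  intros hu hv ht. unfold geomean.
  set (m := t * ln u + (1 - t) * ln v).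
  assert (tangent : forall w, 0 < w -> exp m * (1 + (ln w - m)) <= w).
  { intros w hw. rewrite <- (exp_ln w hw) at 2.
    replace (ln w) with (m + (ln w - m)) at 2 by ring.
    rewrite exp_plus.
    apply Rmult_le_compat_l; [left; apply exp_pos | apply exp_ineq1_le]. }
  pose proof (tangent u hu). pose proof (tangent v hv).
  replace (exp m) with (t * (exp m * (1 + (ln u - m))) + (1 - t) * (exp m * (1 + (ln v - m))))
    by (unfold m; ring).
  apply Rplus_le_compat; apply Rmult_le_compat_l; lra.
Qed.

(* Hoelder: divide by the geometric mean of the sums and apply AM-GM. *)
Lemma geomean_plus_le t u1 u2 v1 v2 : 0 < u1 -> 0 < u2 -> 0 < v1 -> 0 < v2 ->
  0 <= t <= 1 -> geomean t u1 u2 + geomean t v1 v2 <= geomean t (u1 + v1) (u2 + v2).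
Proof.
  intros hu1 hu2 hv1 hv2 ht.
  set (s1 := u1 + v1). set (s2 := u2 + v2).
  assert (hs1 : 0 < s1) by (unfold s1; lra).
  assert (hs2 : 0 < s2) by (unfold s2; lra).
  assert (normalize : forall w1 w2, 0 < w1 -> 0 < w2 ->
            geomean t w1 w2 = geomean t (w1 / s1) (w2 / s2) * geomean t s1 s2).
  { intros w1 w2 hw1 hw2.
    rewrite <- geomean_mult by (try apply Rdiv_lt_0_compat; assumption).
    unfold Rdiv. rewrite !Rmult_assoc, !Rinv_l, !Rmult_1_r by lra. reflexivity. }
  rewrite (normalize u1 u2), (normalize v1 v2), <- Rmult_plus_distr_r by assumption.
  rewrite <- (Rmult_1_l (geomean t s1 s2)) at 2.
  apply Rmult_le_compat_r; [left; apply geomean_pos |].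
  eapply Rle_trans.
  { apply Rplus_le_compat; apply geomean_le_arith; try apply Rdiv_lt_0_compat; assumption. }
  replace (t * (u1 / s1) + (1 - t) * (u2 / s2) + (t * (v1 / s1) + (1 - t) * (v2 / s2)))
    with (t * (s1 / s1) + (1 - t) * (s2 / s2)) by (unfold s1, s2, Rdiv; ring).
  unfold Rdiv. rewrite !Rinv_r by lra. lra.
Qed.

Section LogConvexity.

Variable T : Type.
Variable comb : R -> T -> T -> T.
Variable S : T -> Prop.

Definition convex_on (f : T -> R) : Prop :=
  forall p q t, S p -> S q -> 0 <= t <= 1 ->
    f (comb t p q) <= t * f p + (1 - t) * f q.

Definition concave_on (f : T -> R) : Prop :=
  forall p q t, S p -> S q -> 0 <= t <= 1 ->
    t * f p + (1 - t) * f q <= f (comb t p q).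

Definition log_convex_on (f : T -> R) : Prop :=
  (forall p, S p -> 0 < f p) /\
  forall p q t, S p -> S q -> 0 <= t <= 1 ->
    f (comb t p q) <= geomean t (f p) (f q).

Definition log_concave_on (f : T -> R) : Prop :=
  (forall p, S p -> 0 < f p) /\
  forall p q t, S p -> S q -> 0 <= t <= 1 ->
    geomean t (f p) (f q) <= f (comb t p q).

Lemma concave_log_concave f :
  (forall p, S p -> 0 < f p) -> concave_on f -> log_concave_on f.
Proof.
  intros hpos hf. split; [exact hpos |].
  intros p q t hp hq ht.
  eapply Rle_trans; [apply geomean_le_arith; auto | apply hf; auto].
Qed.

Lemma log_concave_inv f : log_concave_on f -> log_convex_on (fun p => 1 / f p).
Proof.
  intros [hpos hf]. split.
  - intros p hp. apply Rdiv_lt_0_compat; [lra | auto].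
  - intros p q t hp hq ht. unfold Rdiv. rewrite !Rmult_1_l.
    rewrite geomean_inv by auto.
    apply Rinv_le_contravar; [apply geomean_pos | auto].
Qed.

Lemma log_concave_Rpower f l :
  0 <= l -> log_concave_on f -> log_concave_on (fun p => Rpower (f p) l).
Proof.
  intros hl [hpos hf]. split.
  - intros p _. apply exp_pos.
  - intros p q t hp hq ht. rewrite geomean_Rpower.
    apply Rle_Rpower_l; [exact hl |]. split; [apply geomean_pos | auto].
Qed.

Lemma log_convex_const c : 0 < c -> log_convex_on (fun _ => c).
Proof.
  intros hc. split; [auto |].
  intros p q t _ _ _. rewrite geomean_const by exact hc. apply Rle_refl.
Qed.

Lemma log_convex_plus f g :
  log_convex_on f -> log_convex_on g -> log_convex_on (fun p => f p + g p).
Proof.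
  intros [hfpos hf] [hgpos hg]. split.
  - intros p hp. pose proof (hfpos p hp). pose proof (hgpos p hp). lra.
  - intros p q t hp hq ht.
    eapply Rle_trans; [apply Rplus_le_compat; auto |].
    apply geomean_plus_le; auto.
Qed.

Hypothesis S_comb : forall p q t, S p -> S q -> 0 <= t <= 1 -> S (comb t p q).

Lemma log_convex_mult f g :
  log_convex_on f -> log_convex_on g -> log_convex_on (fun p => f p * g p).
Proof.
  intros [hfpos hf] [hgpos hg]. split.
  - intros p hp. apply Rmult_lt_0_compat; auto.
  - intros p q t hp hq ht. rewrite geomean_mult by auto.
    apply Rmult_le_compat; auto; left; auto.
Qed.

Lemma log_convex_ln_convex f : log_convex_on f -> convex_on (fun p => ln (f p)).
Proof.
  intros [hpos hf] p q t hp hq ht.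
  rewrite <- ln_geomean.
  destruct (hf p q t hp hq ht) as [hlt | heq].
  - left. apply ln_increasing; auto.
  - right. now rewrite heq.
Qed.

End LogConvexity.

Arguments log_convex_on {T}.
Arguments log_concave_on {T}.

Definition pt3_x (p : pt3) : R := let '(x, _, _) := p in x.
Definition pt3_y (p : pt3) : R := let '(_, y, _) := p in y.
Definition pt3_d (p : pt3) : R := let '(_, _, d) := p in d.

Lemma Rlt_convex_comb a1 a2 b t : b < a1 -> b < a2 -> 0 <= t <= 1 -> b < t * a1 + (1 - t) * a2.
Proof.
  intros h1 h2 [ht0 ht1].
  destruct ht0 as [ht0 | <-]; [| lra].
  assert (t * b < t * a1) by (apply Rmult_lt_compat_l; assumption).
  assert ((1 - t) * b <= (1 - t) * a2) by (apply Rmult_le_compat_l; lra).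
  lra.
Qed.

Lemma dom3_comb3 p q t : dom3 p -> dom3 q -> 0 <= t <= 1 -> dom3 (comb3 t p q).
Proof.
  destruct p as [[x1 y1] d1], q as [[x2 y2] d2]. simpl.
  intros [hx1 [hy1 hd1]] [hx2 [hy2 hd2]] ht.
  split; [| split]; apply Rlt_convex_comb; assumption.
Qed.

Lemma log_concave_dom3_coords :
  log_concave_on comb3 dom3 (fun p => 1 + pt3_x p) /\
  log_concave_on comb3 dom3 pt3_y /\
  log_concave_on comb3 dom3 pt3_d.
Proof.
  split; [| split]; apply concave_log_concave;
    solve [ intros [[x y] d] [hx [hy hd]]; simpl; lra
          | intros [[x1 y1] d1] [[x2 y2] d2] t _ _ _; simpl; lra ].
Qed.

Theorem proposition1 (tau lambda : R) (htau : 0 < tau) (hlambda : 0 < lambda) :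
  convex_on3 dom3 (cfun tau lambda).
Proof.
  destruct log_concave_dom3_coords as [hx [hy hd]].
  assert (hlog : log_convex_on comb3 dom3 (fun p =>
            1 + (1 / (1 + pt3_x p) * (1 / pt3_y p) + tau)
                * (1 / Rpower (pt3_d p) lambda))).
  { apply log_convex_plus; [apply log_convex_const; lra |].
    apply log_convex_mult; [exact dom3_comb3 | |].
    - apply log_convex_plus; [| apply log_convex_const; exact htau].
      apply log_convex_mult; [exact dom3_comb3 | |]; apply log_concave_inv; assumption.
    - apply log_concave_inv, log_concave_Rpower; [lra | exact hd]. }
  intros [[x1 y1] d1] [[x2 y2] d2] t hp hq ht.
  exact (log_convex_ln_convex _ _ _ dom3_comb3 _ hlog (x1, y1, d1) (x2, y2, d2) t hp hq ht).
Qed.
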